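(* Let $X$ be a bounded subset of $\mathbb R^n$. For every $\epsilon>0$ there exists $\delta>0$ such that for every continuous path $\alpha:[0,1]\to X$ with $\mathcal T(\alpha)<\delta$ we have $\operatorname{diam}(\operatorname{Im}(\alpha))\le\epsilon$.
   Context: Let $g:\mathbb R^n\to[-1,1]$ depend only on the first coordinate $x_1$: $g=-1$ if $x_1\le-3$, $\frac12(x_1+1)$ if $-3\le x_1\le-1$, $0$ if $-1\le x_1\le1$, $\frac12(x_1-1)$ if $1\le x_1\le3$, $1$ if $x_1\ge3$. For a pair $(P,Q)$ of distinct parallel hyperplanes let $g_{(P,Q)}=g\circ h_{(P,Q)}$ where $h_{(P,Q)}$ is a composition of a dilation, rotation and translation sending $P$ to $\{x_1=-3\}$ and $Q$ to $\{x_1=3\}$. For continuous $f:[a,b]\to\mathbb R^n$, $o(f,(P,Q))$ is the supremum of $-\sum_{i=1}^k g_{(P,Q)}(f(a_{i-1}))g_{(P,Q)}(f(a_i))$ over finite $a\le a_0\le\dots\le a_k\le b$ (empty sums $=0$). Fixing a countable dense set $\{(P_i,Q_i)\}$ in the separable metric space of pairs of parallel hyperplanes, the total oscillation is $\mathcal T(\alpha)=\sum_{i\ge1}2^{-i}\frac{o(\alpha,(P_i,Q_i))}{1+o(\alpha,(P_i,Q_i))}$. *)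

From HB Require Import structures.
From mathcomp Require Import all_boot all_order all_algebra.
From mathcomp Require Import all_classical all_reals all_analysis.
Set Implicit Arguments. Unset Strict Implicit. Unset Printing Implicit Defensive.
Import Order.TTheory GRing.Theory Num.Theory.
Import numFieldNormedType.Exports.
Local Open Scope ring_scope.
Local Open Scope classical_set_scope.

Section Defs.
Variables (R : realType) (n : nat).
Notation vec := 'rV[R]_n.

Definition dotv (u x : vec) : R := \sum_(i < n) u 0 i * x 0 i.
Definition enorm (x : vec) : R := Num.sqrt (dotv x x).

(* The function g, depending only on the first coordinate t = x_1. *)
Definition g1 (t : R) : R :=
  if t <= -3 then -1
  else if t <= -1 then (t + 1) / 2
  else if t <= 1 then 0
  else if t <= 3 then (t - 1) / 2
  else 1.

(* A pair (P,Q) of distinct parallel hyperplanes is represented by (u,a,b):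
   P = {x | <u,x> = a}, Q = {x | <u,x> = b}, |u| = 1, a <> b.
   (u,a,b) and (-u,-a,-b) represent the same ordered pair. *)
Definition hpair := (vec * R * R)%type.
Definition valid_pair (p : hpair) : Prop :=
  enorm p.1.1 = 1 /\ p.1.2 <> p.2.

(* g_(P,Q) = g o h_(P,Q): the first coordinate of any similarity h sending
   P to {x_1=-3} and Q to {x_1=3} is -3 + 6(<u,x>-a)/(b-a). *)
Definition gPQ (p : hpair) (x : vec) : R :=
  g1 (-3 + 6 * (dotv p.1.1 x - p.1.2) / (p.2 - p.1.2)).

Definition osc_sum (p : hpair) (f : R -> vec) (s : seq R) : R :=
  - \sum_(i < (size s).-1) gPQ p (f (nth 0 s i)) * gPQ p (f (nth 0 s i.+1)).

Definition osc (a b : R) (f : R -> vec) (p : hpair) : \bar R :=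
  ereal_sup [set (osc_sum p f s)%:E | s in
     [set s : seq R | sorted <=%R s /\ all (fun t => (a <= t) && (t <= b)) s]].

Definition osc_ratio (o : \bar R) : R :=
  if o == +oo%E then 1 else fine o / (1 + fine o).

(* Total oscillation; the dense family is indexed from 0, so the weight of
   the i-th member (paper's index i+1) is 2^-(i+1). *)
Definition total_osc (H : nat -> hpair) (a b : R) (f : R -> vec) : \bar R :=
  (\sum_(0 <= i <oo) ((2%:R ^- i.+1) * osc_ratio (osc a b f (H i)))%:E)%E.

(* Density of a family of pairs in the space of pairs of parallel
   hyperplanes (topology of convergence of the pair, up to the sign of the
   representation). *)
Definition dense_pairs (H : nat -> hpair) : Prop :=
  forall p : hpair, valid_pair p -> forall e : R, 0 < e ->
    exists i : nat, exists sg : bool,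
      let c : R := (-1) ^+ sg in
      enorm (p.1.1 - c *: (H i).1.1) < e /\
      `|p.1.2 - c * (H i).1.2| < e /\ `|p.2 - c * (H i).2| < e.

End Defs.

From HB Require Import structures.
From mathcomp Require Import all_boot all_order all_algebra.
From mathcomp Require Import all_classical all_reals all_analysis.
From mathcomp Require Import ring lra.
Import Order.TTheory GRing.Theory Num.Theory.
Import numFieldNormedType.Exports.
Local Open Scope ring_scope.
Local Open Scope classical_set_scope.
Set Implicit Arguments. Unset Strict Implicit. Unset Printing Implicit Defensive.

(** If two points of the path differ by more than d in some coordinate x_j,
  then a thin slab {a <= x_j <= b} of width d/4 lies strictly between them;
  any pair of hyperplanes close enough to the two faces of the slab gives
  g = -1 at one point and g = +1 at the other, so the two-point partition
  already forces an oscillation >= 1 for that pair.  Since X is bounded,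
  finitely many slabs suffice, and by density each of them is approximated
  by some (P_i, Q_i) with i below a fixed bound N; the total oscillation of
  the path is then at least 2^-(N+1)/2. *)

Section Vectors.
Variables (R : realType) (n : nat).
Notation vec := 'rV[R]_n.

Lemma coord_le_mx_norm (x : vec) (i : 'I_n) : `|x 0 i| <= `|x|.
Proof.
have := le_bigmax 0 (fun ij : 'I_1 * 'I_n => `|x ij.1 ij.2|) (0, i).
by rewrite -mx_normrE.
Qed.

Lemma coord_le_enorm (x : vec) (j : 'I_n) : `|x 0 j| <= enorm x.
Proof.
rewrite /enorm -sqrtr_sqr; apply: ler_wsqrtr.
rewrite /dotv (bigD1 j) //= expr2 lerDl; apply: sumr_ge0 => i _.
by rewrite -expr2 sqr_ge0.
Qed.

Lemma enorm_le_coord (x : vec) (d : R) : 0 <= d ->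
  (forall j, `|x 0 j| <= d) -> enorm x <= n%:R * d.
Proof.
move=> d0 hx; rewrite /enorm.
have -> : n%:R * d = Num.sqrt ((n%:R * d) ^+ 2).
  by rewrite sqrtr_sqr ger0_norm // mulr_ge0.
apply: ler_wsqrtr; apply: (@le_trans _ _ (\sum_(i < n) d ^+ 2)).
  apply: ler_sum => i _; rewrite -expr2 -real_normK ?num_real //.
  by rewrite lerXn2r // ?nnegrE.
rewrite sumr_const card_ord -[d ^+ 2 *+ n]mulr_natl exprMn.
apply: ler_wpM2r; first exact: sqr_ge0.
case: n => [|m]; first by rewrite expr0n.
by rewrite expr2 ler_peMl // ler1n.
Qed.

Lemma exists_coord_gt (x : vec) (d : R) : 0 <= d -> n%:R * d < enorm x ->
  exists j, d < `|x 0 j|.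
Proof.
move=> d0 hx; have [j hj|hnone] := pickP (fun j => d < `|x 0 j|).
  by exists j.
suff : enorm x <= n%:R * d by rewrite leNgt hx.
by apply: enorm_le_coord => // j; rewrite leNgt hnone.
Qed.

Lemma dotvZ (c : R) (u x : vec) : dotv (c *: u) x = c * dotv u x.
Proof. by rewrite /dotv mulr_sumr; apply: eq_bigr => i _; rewrite mxE mulrA. Qed.

Lemma dotvB (u v x : vec) : dotv (u - v) x = dotv u x - dotv v x.
Proof. by rewrite /dotv -sumrB; apply: eq_bigr => i _; rewrite !mxE mulrBl. Qed.

Lemma dotv_delta (j : 'I_n) (x : vec) : dotv (delta_mx 0 j) x = x 0 j.
Proof.
rewrite /dotv (bigD1 j) //= big1 ?addr0; first by rewrite mxE !eqxx mul1r.
by move=> i /negbTE hij; rewrite mxE hij andbF mul0r.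
Qed.

Lemma enorm_delta (j : 'I_n) : enorm (delta_mx 0 j : vec) = 1.
Proof. by rewrite /enorm dotv_delta mxE !eqxx sqrtr1. Qed.

Lemma dotv_near_delta (j : 'I_n) (u x : vec) (e M : R) :
  enorm (delta_mx 0 j - u) < e -> (forall i, `|x 0 i| <= M) ->
  `|dotv u x - x 0 j| <= n%:R * e * M.
Proof.
move=> hu hx; rewrite -dotv_delta -dotvB /dotv.
apply: (le_trans (ler_norm_sum _ _ _)).
apply: (@le_trans _ _ (\sum_(i < n) e * M)).
  apply: ler_sum => i _; rewrite normrM; apply: ler_pM => //.
  rewrite -[u - _]opprB mxE normrN.
  exact: le_trans (coord_le_enorm _ i) (ltW hu).
by rewrite sumr_const card_ord -[e * M *+ n]mulr_natl mulrA.
Qed.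

End Vectors.

Lemma bounded_set_coord (R : realType) (n : nat) (X : set 'rV[R]_n) :
  bounded_set X ->
  exists2 M, 0 <= M & forall x, X x -> forall i, `|x 0 i| <= M.
Proof.
case=> M0 [_ hM0]; exists (`|M0| + 1); first by rewrite addr_ge0.
move=> x Xx i; apply: le_trans (coord_le_mx_norm x i) _.
by apply: hM0 Xx; have := ler_norm M0; lra.
Qed.

Lemma finite_choice_bound (T : finType) (P : T -> nat -> Prop) :
  (forall t, exists i, P t i) -> exists N, forall t, exists2 i, (i <= N)%N & P t i.
Proof.
move=> hP; have [f hf] := choice hP.
by exists (\max_t f t) => t; exists (f t); [exact: leq_bigmax | exact: hf].
Qed.

Section Slabs.
Variables (R : realType) (n : nat).
Notation vec := 'rV[R]_n.

Lemma g1_eqN1 (t : R) : t <= -3 -> g1 t = -1.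
Proof. by move=> h; rewrite /g1 h. Qed.

Lemma g1_eq1 (t : R) : 3 <= t -> g1 t = 1.
Proof.
move=> h; rewrite /g1.
have -> : (t <= -3) = false by apply/negbTE; rewrite -ltNge; lra.
have -> : (t <= -1) = false by apply/negbTE; rewrite -ltNge; lra.
have -> : (t <= 1) = false by apply/negbTE; rewrite -ltNge; lra.
case: ifP => // h3; have -> : t = 3 by lra.
lra.
Qed.

Lemma g1_affine_below (u a b : R) : a < b -> u <= a ->
  g1 (-3 + 6 * (u - a) / (b - a)) = -1.
Proof.
move=> hab hu; apply: g1_eqN1.
have : 0 < (b - a)^-1 by rewrite invr_gt0 subr_gt0.
set q := (b - a)^-1 => hq.
have : u - a <= 0 by lra.
nra.
Qed.

Lemma g1_affine_above (u a b : R) : a < b -> b <= u ->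
  g1 (-3 + 6 * (u - a) / (b - a)) = 1.
Proof.
move=> hab hu; apply: g1_eq1.
have hq : (b - a) / (b - a) = 1 by rewrite divff // subr_eq0 gt_eqF.
have : 0 < (b - a)^-1 by rewrite invr_gt0 subr_gt0.
move: hq; set q := (b - a)^-1 => hq q0.
have : (b - a) * q <= (u - a) * q by rewrite ler_pM2r //; lra.
rewrite -mulrA; nra.
Qed.

Lemma gPQ_scale (p : hpair R n) (c : R) (x : vec) : c != 0 ->
  gPQ p x = g1 (-3 + 6 * (dotv (c *: p.1.1) x - c * p.1.2)
                  / (c * p.2 - c * p.1.2)).
Proof.
move=> c0; rewrite /gPQ dotvZ -!mulrBr invfM.
congr g1; congr (_ + _); rewrite !mulrA; congr (_ * _).
by rewrite mulrAC mulfK.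
Qed.

Definition approx_pair (e : R) (q p : hpair R n) : Prop :=
  exists sg : bool, let c : R := (-1) ^+ sg in
    enorm (q.1.1 - c *: p.1.1) < e /\
    `|q.1.2 - c * p.1.2| < e /\ `|q.2 - c * p.2| < e.

Lemma approx_slab_separates (p : hpair R n) (j : 'I_n) (a b e M : R)
    (x y : vec) :
  approx_pair e (delta_mx 0 j, a, b) p ->
  (forall i, `|x 0 i| <= M) -> (forall i, `|y 0 i| <= M) ->
  x 0 j + (n%:R * e * M + e) <= a -> 2 * e <= b - a ->
  b + (n%:R * e * M + e) <= y 0 j ->
  gPQ p x = -1 /\ gPQ p y = 1.
Proof.
case=> sg /= [hu [ha hb]] hx hy hxa hab hyb.
have c0 : (-1) ^+ sg != 0 :> R by rewrite signr_eq0.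
rewrite !(gPQ_scale _ _ c0).
have := dotv_near_delta hu hx; have := dotv_near_delta hu hy.
move: ha hb; rewrite !ltr_norml !ler_norml.
move=> /andP[? ?] /andP[? ?] /andP[? ?] /andP[? ?].
by split; [apply: g1_affine_below | apply: g1_affine_above]; lra.
Qed.

Section Separation.
Variable H : nat -> hpair R n.
Hypothesis Hdense : dense_pairs H.

Lemma exists_index_separating (M d : R) : 0 <= M -> 0 < d ->
  exists N, forall x y : vec,
    (forall i, `|x 0 i| <= M) -> (forall i, `|y 0 i| <= M) ->
    forall j, d < y 0 j - x 0 j ->
    exists2 i, (i <= N)%N & gPQ (H i) x = -1 /\ gPQ (H i) y = 1.
Proof.
move=> M0 d0; pose w := d / 4; pose e := w / (4 * (n%:R * M + 1)).
have w0 : 0 < w by rewrite divr_gt0.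
have dw : d = 4 * w by rewrite /w mulrC divfK.
have n0 : 0 <= n%:R :> R by [].
have e0 : 0 < e by rewrite divr_gt0 //; nra.
have err : n%:R * e * M + e = w / 4.
  by rewrite /e; field; apply: lt0r_neq0; nra.
pose K := (Num.truncn (2 * M / w)).+3.
pose slab (j : 'I_n) (k : nat) : hpair R n :=
  (delta_mx 0 j, -M + k%:R * w, -M + k%:R * w + w).
have slab_valid j k : valid_pair (slab j k).
  by split; [exact: enorm_delta | move=> /= h; lra].
have slab_approx (jk : 'I_n * 'I_K) : exists i, approx_pair e (slab jk.1 jk.2) (H i).
  exact: Hdense (slab_valid jk.1 jk.2) e e0.
have [N hN] := finite_choice_bound slab_approx.
exists N => x y hx hy j hxy.
have /andP[xM Mx] : -M <= x 0 j <= M by rewrite -ler_norml.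
have t0 : 0 <= (x 0 j + M) / w by rewrite divr_ge0 //; lra.
pose t := Num.truncn ((x 0 j + M) / w).
have /andP[ht1 ht2] := truncn_itv t0; rewrite -/t in ht1 ht2.
have tK : (t.+2 < K)%N.
  rewrite /K ltnS ltnS -(ltr_nat R); apply: le_lt_trans (truncnS_gt _).
  by apply: le_trans ht1 _; rewrite ler_pM2r ?invr_gt0 //; lra.
have {ht1}tx : t%:R * w <= x 0 j + M by rewrite -ler_pdivlMr.
have {ht2}xt : x 0 j + M < t%:R * w + w.
  by move: ht2; rewrite ltr_pdivrMr // -[t.+1]addn1 natrD mulrDl mul1r.
(* The slab number t+2 lies at least w above x_j and, as y_j > x_j + 4w, at
   least w below y_j. *)
have [i iN hi] := hN (j, Ordinal tK).
have neM : 0 <= n%:R * e * M by rewrite mulr_ge0 // mulr_ge0 // ltW.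
have t2 : t.+2%:R * w = t%:R * w + 2 * w by rewrite -[t.+2]addn2 natrD mulrDl.
exists i => //; apply: (approx_slab_separates hi hx hy); rewrite /= ?t2 ?err; lra.
Qed.

Lemma exists_index_sign_change (M d : R) : 0 <= M -> 0 < d ->
  exists N, forall x y : vec,
    (forall i, `|x 0 i| <= M) -> (forall i, `|y 0 i| <= M) ->
    forall j, d < `|x 0 j - y 0 j| ->
    exists2 i, (i <= N)%N & gPQ (H i) x * gPQ (H i) y = -1.
Proof.
move=> M0 d0; have [N hN] := exists_index_separating M0 d0.
exists N => x y hx hy j; rewrite ltr_normr => /orP[] hxy.
  have [i iN [gy gx]] := hN _ _ hy hx j hxy.
  by exists i; rewrite // gx gy mul1r.
rewrite opprB in hxy; have [i iN [gx gy]] := hN _ _ hx hy j hxy.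
by exists i; rewrite // gx gy mulr1.
Qed.

End Separation.
End Slabs.

Section Oscillation.
Variables (R : realType) (n : nat) (a b : R) (f : R -> 'rV[R]_n).

Lemma osc_ge0 (p : hpair R n) : (0 <= osc a b f p)%E.
Proof.
apply: ereal_sup_ubound; exists [::] => //=.
by rewrite /osc_sum big_ord0 oppr0.
Qed.

Lemma osc_ge1_sign_change (p : hpair R n) (s t : R) :
  a <= s <= b -> a <= t <= b -> gPQ p (f s) * gPQ p (f t) = -1 ->
  (1 <= osc a b f p)%E.
Proof.
move=> hs ht hg; apply: ereal_sup_ubound.
have [hst|hts] := leP s t.
  exists [:: s; t]; first by split; rewrite /= ?hst ?hs ?ht.
  by rewrite /osc_sum /= big_ord1 /= hg opprK.
exists [:: t; s]; first by split; rewrite /= ?(ltW hts) ?hs ?ht.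
by rewrite /osc_sum /= big_ord1 /= mulrC hg opprK.
Qed.

Lemma osc_ratio_ge0 (o : \bar R) : (0 <= o)%E -> 0 <= osc_ratio o.
Proof.
rewrite /osc_ratio; case: o => [r| |] //= h.
by rewrite lee_fin in h; rewrite divr_ge0 //; lra.
Qed.

Lemma osc_ratio_ge_half (o : \bar R) : (1 <= o)%E -> 2^-1 <= osc_ratio o.
Proof.
rewrite /osc_ratio; case: o => [r| |] //= h; last lra.
rewrite lee_fin in h; rewrite ler_pdivlMr; last lra.
by rewrite mulrC ler_pdivrMr; lra.
Qed.

Lemma total_osc_ge_term (H : nat -> hpair R n) (i : nat) :
  ((2%:R ^- i.+1 * osc_ratio (osc a b f (H i)))%:E <= total_osc H a b f)%E.
Proof.
have term_ge0 k : (0 <= (2%:R ^- k.+1 * osc_ratio (osc a b f (H k)))%:E)%E.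
  by rewrite lee_fin mulr_ge0 // osc_ratio_ge0 // osc_ge0.
apply: le_trans (nneseries_lim_ge i.+1 (fun k _ _ => term_ge0 k)).
by rewrite big_nat_recr //=; apply: leeDr; exact: sume_ge0.
Qed.

Lemma total_osc_ge_sign_change (H : nat -> hpair R n) (i : nat) (s t : R) :
  a <= s <= b -> a <= t <= b -> gPQ (H i) (f s) * gPQ (H i) (f t) = -1 ->
  ((2%:R ^- i.+1 / 2)%:E <= total_osc H a b f)%E.
Proof.
move=> hs ht hg; apply: le_trans (total_osc_ge_term H i); rewrite lee_fin.
apply: ler_wpM2l; first by rewrite invr_ge0 exprn_ge0.
exact/osc_ratio_ge_half/(osc_ge1_sign_change hs ht hg).
Qed.

End Oscillation.

Theorem lemma3p15 (R : realType) (n : nat) (H : nat -> hpair R n)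
  (Hvalid : forall i, valid_pair (H i)) (Hdense : dense_pairs H)
  (X : set 'rV[R]_n) (HX : bounded_set X) :
  forall eps : R, 0 < eps -> exists2 delta : R, 0 < delta &
    forall alpha : R -> 'rV[R]_n,
      {within `[0%R, 1%R], continuous alpha} ->
      (forall t, 0 <= t <= 1 -> X (alpha t)) ->
      (total_osc H 0 1 alpha < delta%:E)%E ->
      forall s t, 0 <= s <= 1 -> 0 <= t <= 1 ->
        enorm (alpha s - alpha t) <= eps.
Proof.
move=> eps eps0; have [M M0 XM] := bounded_set_coord HX.
pose d := eps / (n%:R + 1).
have d0 : 0 < d by rewrite divr_gt0 // ltr_wpDl.
have nd : n%:R * d < eps.
  have deps : d * (n%:R + 1) = eps by rewrite /d divfK // lt0r_neq0 // ltr_wpDl.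
  nra.
have [N hN] := exists_index_sign_change Hdense M0 d0.
exists (2%:R ^- N.+1 / 2); first by rewrite divr_gt0 // invr_gt0 exprn_gt0.
move=> alpha _ Xalpha small s t hs ht; rewrite leNgt; apply/negP => far.
have [j] := exists_coord_gt (ltW d0) (lt_trans nd far).
have -> : (alpha s - alpha t) 0 j = alpha s 0 j - alpha t 0 j by rewrite !mxE.
move=> hj.
have [i iN hi] := hN _ _ (XM _ (Xalpha s hs)) (XM _ (Xalpha t ht)) j hj.
have := total_osc_ge_sign_change hs ht hi; apply/negP; rewrite -ltNge.
apply: lt_le_trans small _; rewrite lee_fin ler_pM2r // -!exprVn.
by apply: ler_wiXn2l => //; lra.
Qed.
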